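(* Work in max-plus algebra. Consider the stochastic dynamic system $\bm{x}(k)=\bm{A}^{T}(k)\bm{x}(k-1)$, $k=1,2,\ldots$, with $\bm{x}(0)=\bm{1}$, where each $\bm{A}(k)$ is a random $n\times n$ block diagonal matrix \[ \bm{A}(k)=\begin{pmatrix}\bm{D}_{1}(k)&&\bm{0}\\&\ddots&\\ \bm{0}&&\bm{D}_{s}(k)\end{pmatrix} \] (block sizes independent of $k$). For $r=1,\ldots,s$ let $\bm{D}_{rk}=\bm{D}_{r}(1)\cdots\bm{D}_{r}(k)$ (max-plus product) and suppose that $\|\bm{D}_{rk}\|^{1/k}\to\mu_{r}$ with probability one as $k\to\infty$, i.e. $\frac1k\max_{i,j}(\bm{D}_{rk})_{ij}\to\mu_r$ w.p.1. Then the Lyapunov exponent of the system is \[ \lambda=\lim_{k\to\infty}\|\bm{x}(k)\|^{1/k}=\lim_{k\to\infty}\frac1k\max_{1\le i\le n}x_i(k)=\bigoplus_{r=1}^{s}\mu_r=\max_{1\le r\le s}\mu_r \] (with probability one).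
   Context: Max-plus algebra is $(\mathbb{R}\cup\{-\infty\},\oplus=\max,\otimes=+)$ with zero $\mathbb{0}=-\infty$ and identity $\mathbb{1}=0$; matrix products are $(\bm{A}\bm{C})_{ij}=\max_k(a_{ik}+c_{kj})$, and $\bm{0}$ denotes a block with all entries $-\infty$. $\bm{1}$ is the vector with all entries $0$. The tropical norm of a matrix or vector is the maximum of its entries, and scalar power $x^{1/k}$ means $x/k$. Standing assumptions on the system: each entry of $\bm{A}(k)$ is either a constant or a random variable; corresponding random entries of $\bm{A}(1),\bm{A}(2),\ldots$ are independent and identically distributed with finite expectation and variance (entries within one matrix need not be independent). Note $\bm{x}(k)=(\bm{A}(1)\cdots\bm{A}(k))^{T}\bm{x}(0)$. *)

(* Max-plus algebra realised inside the
   extended reals \bar R: zero = -oo, identity = 0, (+) = maxe, (x) = +. *)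
From HB Require Import structures.
From mathcomp Require Import all_boot all_order all_algebra.
From mathcomp Require Import all_classical all_reals all_analysis.
Set Implicit Arguments. Unset Strict Implicit. Unset Printing Implicit Defensive.
Import Order.TTheory GRing.Theory Num.Theory.
Local Open Scope classical_set_scope.
Local Open Scope ereal_scope.

Section MaxPlus.
Variable R : realType.

Definition mp_mul (m : nat) (A C : 'M[\bar R]_m) : 'M[\bar R]_m :=
  \matrix_(i, j) \big[maxe/-oo]_(l < m) (A i l + C l j).

Definition mp_id (m : nat) : 'M[\bar R]_m :=
  \matrix_(i, j) (if i == j then 0 else -oo).

Fixpoint mp_prod (m : nat) (F : nat -> 'M[\bar R]_m) (k : nat) : 'M[\bar R]_m :=
  match k with
  | O => mp_id m
  | S k' => mp_mul (mp_prod F k') (F k)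
  end.

Definition mp_norm (m : nat) (A : 'M[\bar R]_m) : \bar R :=
  \big[maxe/-oo]_(i < m) \big[maxe/-oo]_(j < m) A i j.

Definition mp_vnorm (m : nat) (x : 'I_m -> \bar R) : \bar R :=
  \big[maxe/-oo]_(i < m) x i.

(* the state vector: x(0) = 1 (all zeros), x(k) = A(k)^T (x) x(k-1) *)
Fixpoint mp_state (n : nat) (A : nat -> 'M[\bar R]_n) (k : nat) : 'I_n -> \bar R :=
  match k with
  | O => fun _ => 0
  | S k' => fun i => \big[maxe/-oo]_(j < n) (A k j i + mp_state A k' j)
  end.

Definition diag_block (n s : nat) (blk : 'I_n -> 'I_s) (r : 'I_s)
  (A : 'M[\bar R]_n) : 'M[\bar R]_(#|[pred i | blk i == r]|) :=
  \matrix_(i, j) A (enum_val i) (enum_val j).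

Definition block_diagonal (n s : nat) (blk : 'I_n -> 'I_s) (A : 'M[\bar R]_n) :=
  forall i j, blk i != blk j -> A i j = -oo.

End MaxPlus.

Section Prob.
Context d (T : measurableType d) (R : realType).

Definition iid_seq (P : probability T R) (X : nat -> T -> R) : Prop :=
  (forall k, (0 < k)%N -> measurable_fun setT (X k)) /\
  (forall k (B : set R), (0 < k)%N -> measurable B ->
      P (X k @^-1` B) = P (X 1%N @^-1` B)) /\
  (forall (sq : seq nat) (B : nat -> set R), uniq sq -> all (fun k => 0 < k)%N sq ->
      (forall k, measurable (B k)) ->
      P (\bigcap_(k in [set` sq]) (X k @^-1` B k)) = \prod_(k <- sq) P (X k @^-1` B k)).

Definition entry_assumption (P : probability T R) (n : nat)
  (A : nat -> T -> 'M[\bar R]_n) (i j : 'I_n) : Prop :=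
  (exists c : \bar R, c != +oo /\ forall k w, (0 < k)%N -> A k w i j = c) \/
  (exists X : nat -> T -> R,
     (forall k w, (0 < k)%N -> A k w i j = (X k w)%:E) /\
     iid_seq P X /\
     P.-integrable setT (EFin \o X 1%N) /\
     P.-integrable setT (EFin \o (fun w => X 1%N w ^+ 2)%R)).

End Prob.

From HB Require Import structures.
From mathcomp Require Import all_boot all_order all_algebra.
From mathcomp Require Import all_classical all_reals all_analysis.
Set Implicit Arguments. Unset Strict Implicit. Unset Printing Implicit Defensive.
Import Order.TTheory GRing.Theory Num.Theory.
Local Open Scope classical_set_scope.
Local Open Scope ereal_scope.

(* Since x(k) = (A(1) ... A(k))^T x(0) with x(0) = 1, the coordinate x_i(k) is
   the maximum of column i of A(1) ... A(k).  For block diagonal matrices the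
   coordinates in block r evolve as the state of the block system driven by
   D_r(1), D_r(2), ..., so ||x(k)|| = max_r ||D_rk||.  Division by k > 0
   commutes with the maximum, and max is continuous on the extended reals, so
   on the intersection of the s almost sure events where ||D_rk||^(1/k) -> mu_r
   the limit is max_r mu_r. *)

Section MaxPlusState.
Variable R : realType.

Lemma mp_state_prodE m (F : nat -> 'M[\bar R]_m) k i :
  mp_state F k i = \big[maxe/-oo]_j mp_prod F k j i.
Proof.
elim: k i => [|k IH] i /=.
  rewrite (bigD1 i) //= big1 ?maxeNy; first by rewrite mxE eqxx.
  by move=> j /negbTE ji; rewrite mxE ji.
under [RHS]eq_bigr => j _ do rewrite mxE.
rewrite exchange_big /=; apply: eq_bigr => l _.
by rewrite IH addeC (big_morph (+%E^~ _) (fun x y => adde_maxl x y _) (addNye _)).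
Qed.

Section BlockDiagonal.
Variables (n s : nat) (blk : 'I_n -> 'I_s) (B : nat -> 'M[\bar R]_n).
Hypothesis B_block : forall k, (0 < k)%N -> block_diagonal blk (B k).

Lemma mp_state_diag_block r k (i : 'I_#|[pred i | blk i == r]|) :
  mp_state B k (enum_val i) = mp_state (fun l => diag_block blk r (B l)) k i.
Proof.
elim: k i => [//|k IH] i /=.
have /eqP blk_i : blk (enum_val i) == r by have := enum_valP i.
rewrite (bigID (fun j => blk j == r)) /= [X in maxe _ X]big1 ?maxeNy; last first.
  by move=> j /negP j_r; rewrite B_block // blk_i; apply/negP.
rewrite (eq_bigl (mem [pred j | blk j == r])) //.
rewrite (big_enum_val (fun j => B k.+1 j (enum_val i) + mp_state B k j)).
by apply: eq_bigr => j _; rewrite IH mxE.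
Qed.

Lemma mp_vnorm_state_block_diagonal k :
  mp_vnorm (mp_state B k) =
  \big[maxe/-oo]_(r < s) mp_norm (mp_prod (fun l => diag_block blk r (B l)) k).
Proof.
rewrite /mp_vnorm (partition_big blk xpredT) //=; apply: eq_bigr => r _.
rewrite (eq_bigl (mem [pred j | blk j == r])) //.
rewrite (big_enum_val (mp_state B k)).
under eq_bigr => i _ do rewrite mp_state_diag_block mp_state_prodE.
by rewrite /mp_norm exchange_big.
Qed.

End BlockDiagonal.

Lemma cvg_bigmaxe (U : Type) (F : set_system U) {FF : Filter F}
    (I : Type) (r : seq I) (h : I -> U -> \bar R) (l : I -> \bar R) :
  (forall i, h i @ F --> l i) ->
  (fun u => \big[maxe/-oo]_(i <- r) h i u) @ F --> \big[maxe/-oo]_(i <- r) l i.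
Proof.
move=> h_cvg; elim: r => [|i r IH].
  by under eq_fun do rewrite big_nil; rewrite big_nil; apply: cvg_cst.
under eq_fun do rewrite big_cons; rewrite big_cons.
apply: (continuous2_cvg (h := fun x y : \bar R => maxe x y) _ _ (h_cvg i) IH).
exact: (@max_continuous _ (\bar R) (l i, _)).
Qed.

End MaxPlusState.

Theorem lemma2 (R : realType) (d : measure_display) (T : measurableType d)
  (P : probability T R) (n s : nat) (blk : 'I_n -> 'I_s)
  (A : nat -> T -> 'M[\bar R]_n) (mu : 'I_s -> \bar R) :
  {homo blk : i j / (i <= j)%N >-> (i <= j)%N} ->
  (forall r : 'I_s, exists i, blk i = r) ->
  (forall k w, (0 < k)%N -> block_diagonal blk (A k w)) ->
  (forall i j, entry_assumption P A i j) ->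
  (forall r : 'I_s, {ae P, forall w,
     (fun k : nat => ((k%:R)^-1)%:E *
        mp_norm (mp_prod (fun l => diag_block blk r (A l w)) k)) @ \oo --> mu r}) ->
  {ae P, forall w,
     (fun k : nat => ((k%:R)^-1)%:E * mp_vnorm (mp_state (fun l => A l w) k))
       @ \oo --> \big[maxe/-oo]_(r < s) mu r}.
Proof.
(* Block diagonality alone makes the identity ||x(k)|| = max_r ||D_rk|| hold
   pathwise. *)
move=> _ _ A_block _ mu_cvg.
apply: filterS (filter_forall _ mu_cvg) => w w_cvg.
apply: cvg_trans; last exact: cvg_bigmaxe w_cvg.
apply: near_eq_cvg; near=> k.
have c_gt0 : (0 < (k%:R)^-1 :> R)%R by rewrite invr_gt0 ltr0n; near: k; exists 1%N.
have c_maxe (x y : \bar R) : ((k%:R)^-1)%:E * maxe x y =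
    maxe (((k%:R)^-1)%:E * x) (((k%:R)^-1)%:E * y).
  by rewrite maxe_pMr // lee_fin ltW.
have c_Ny : ((k%:R)^-1)%:E * -oo = -oo :> \bar R by rewrite muleC gt0_mulNye ?lte_fin.
by rewrite (mp_vnorm_state_block_diagonal (A_block ^~ w)) (big_morph _ c_maxe c_Ny).
Unshelve. all: by end_near.
Qed.
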